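(* Let $n\ge2$ and let $Z_1=\{z_{j,1}\}_{j=1}^n$ and $Z_2=\{z_{j,2}\}_{j=1}^{n-1}$ be subsets of the unit circle, $z_{j,l}=e^{ix_{j,l}}$, with exactly one common point, arranged as $$x_{1,1}<x_{1,2}<x_{2,1}<x_{2,2}<\dots<x_{n-1,1}<x_{n-1,2}=x_{n,1}<x_{1,1}+2\pi.$$ For $l=1,2$ let $\mathcal{C}_1^{(l)}=\mathcal{C}(\alpha_0^{(l)},\dots,\alpha_{n-2}^{(l)};\beta_1^{(l)})$ (order $n$) and $\mathcal{C}_2^{(l)}=\mathcal{C}(\alpha_0^{(l)},\dots,\alpha_{n-3}^{(l)};\beta_2^{(l)})$ (order $n-1$) be finite CMV matrices such that the set of eigenvalues of $\mathcal{C}_1^{(l)}$ is $Z_1$ and the set of eigenvalues of $\mathcal{C}_2^{(l)}$ is $Z_2$. If $\alpha_{n-2}^{(1)}=\alpha_{n-2}^{(2)}$, then $\mathcal{C}_1^{(1)}=\mathcal{C}_1^{(2)}$ and $\mathcal{C}_2^{(1)}=\mathcal{C}_2^{(2)}$.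
   Context: For $\alpha\in\mathbb{C}$ with $|\alpha|\le 1$ put $\rho=\sqrt{1-|\alpha|^2}$ and $\Theta(\alpha)=\begin{pmatrix}\bar\alpha&\rho\\ \rho&-\alpha\end{pmatrix}$. Given $N\ge1$, $\alpha_0,\dots,\alpha_{N-2}$ with $|\alpha_j|<1$ and $\beta$ with $|\beta|=1$, the finite CMV matrix $\mathcal{C}(\alpha_0,\dots,\alpha_{N-2};\beta)$ of order $N$ is the $N\times N$ matrix $\mathcal{L}\mathcal{M}$, where: if $N=2k+1$, $\mathcal{L}=\Theta(\alpha_0)\oplus\Theta(\alpha_2)\oplus\cdots\oplus\Theta(\alpha_{2k-2})\oplus\bar\beta$ and $\mathcal{M}=1\oplus\Theta(\alpha_1)\oplus\cdots\oplus\Theta(\alpha_{2k-1})$; if $N=2k$, $\mathcal{L}=\Theta(\alpha_0)\oplus\Theta(\alpha_2)\oplus\cdots\oplus\Theta(\alpha_{2k-2})$ and $\mathcal{M}=1\oplus\Theta(\alpha_1)\oplus\cdots\oplus\Theta(\alpha_{2k-3})\oplus\bar\beta$ ($1$ and $\bar\beta$ are $1\times1$ blocks; for $N=1$ the matrix is $(\bar\beta)$). *)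

From HB Require Import structures.
From mathcomp Require Import all_boot all_order all_algebra.
From mathcomp Require Import complex.
From mathcomp Require Import reals trigo.
Set Implicit Arguments. Unset Strict Implicit. Unset Printing Implicit Defensive.
Import Order.TTheory GRing.Theory Num.Theory.
Local Open Scope ring_scope.

Section CMV.
Variable R : realType.
Local Notation C := R[i].

Definition rho (a : C) : C := sqrtC (1 - `|a| ^+ 2).

Definition Theta (a : C) : 'M[C]_2 :=
  \matrix_(r < 2, c < 2)
    if (r == 0 :> nat) && (c == 0 :> nat) then a^*
    else if (r == 1 :> nat) && (c == 1 :> nat) then - a
    else rho a.

(* Entry (i,j) of the N x N direct sum
     s = 0 :  Theta(al 0) (+) Theta(al 2) (+) ... [(+) conj be if N odd]
     s = 1 :  1 (+) Theta(al 1) (+) Theta(al 3) (+) ... [(+) conj be if N even]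
   The 2x2 block number b occupies rows/columns 2b-s, 2b-s+1 and carries
   Theta(al (2b-s)); indices not covered by a full 2x2 block are the leading
   1x1 block "1" (s = 1, index 0) or the trailing 1x1 block "conj be". *)
Definition cmv_factor (N s : nat) (al : nat -> C) (be : C) : 'M[C]_N :=
  \matrix_(i < N, j < N)
    let b := ((i + s) %/ 2)%N in
    if ((s <= 2 * b) && (2 * b - s + 1 <= N - 1))%N then
      if ((j + s) %/ 2 == b)%N then
        Theta (al (2 * b - s)%N) (inord ((i + s) %% 2)) (inord ((j + s) %% 2))
      else 0
    else if i == j then (if (s == 1%N) && (i == 0 :> nat) then 1 else be^*)
    else 0.

(* Finite CMV matrix C(al 0, ..., al (N-2); be) of order N : L * M. *)
Definition CMV (N : nat) (al : nat -> C) (be : C) : 'M[C]_N :=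
  cmv_factor N 0 al be *m cmv_factor N 1 al be.

Definition expi (x : R) : C := (cos x +i* sin x)%C.

End CMV.

(* Write C = L M.  Since M is unitary, X - L M = (X M^* - L) M, and the pencil
   X M^* - L is tridiagonal: its leading minors obey the Szego recursion, so the
   characteristic polynomial of C(alpha_0, ..., alpha_{N-2}; beta) is the
   paraorthogonal polynomial z Phi_{N-1} - conj(beta) Phi_{N-1}^*.  The prescribed
   spectra consist of N resp. N-1 distinct points of the circle, so they fix both
   characteristic polynomials.  Their values at 0 give the betas; eliminating the
   reversed polynomials between the degree n-1 and degree n polynomials, which
   share alpha_{n-2} (and |alpha_{n-2}| < 1), gives Phi_{n-2}, and the inverse
   Szego recursion then recovers alpha_0, ..., alpha_{n-3}. *)

From HB Require Import structures.
From mathcomp Require Import all_boot all_order all_algebra.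
From mathcomp Require Import complex.
From mathcomp Require Import reals trigo.
From mathcomp Require Import zify ring lra.
Import Order.TTheory GRing.Theory Num.Theory.
Local Open Scope ring_scope.
Local Open Scope sesquilinear_scope.

Set Implicit Arguments. Unset Strict Implicit. Unset Printing Implicit Defensive.

Lemma bump_small n i : (i < n)%N -> bump n i = i.
Proof. by move=> lt_in; rewrite /bump leqNgt lt_in. Qed.

Lemma sum_ord_band (V : nmodType) N (f : nat -> V) i : (i < N)%N ->
  (forall k, (k.+1 < i)%N || (i.+1 < k)%N -> f k = 0) ->
  \sum_(k < N) f k =
    (if (0 < i)%N then f i.-1 else 0) + f i + (if (i.+1 < N)%N then f i.+1 else 0).
Proof.
move=> lt_iN f_band.
have split_f k : f k = (if k == i.-1 then (if (0 < i)%N then f i.-1 else 0) else 0)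
    + (if k == i then f i else 0) + (if k == i.+1 then f i.+1 else 0).
  by repeat (case: ifP => ?; try (exfalso; lia));
    rewrite ?add0r ?addr0; (apply: f_band; lia) || (f_equal; lia).
rewrite (eq_bigr _ (fun (k : 'I_N) _ => split_f k)) !big_split /= -!big_mkcond.
rewrite !(big_ord1_eq _ (fun=> _)) lt_iN.
by have -> : (i.-1 < N)%N by lia.
Qed.

Lemma char_poly_prod_eigenvalues (F : fieldType) n (A : 'M[F]_n) (rs : seq F) :
  size rs = n -> uniq rs -> {in rs, forall z, eigenvalue A z} ->
  char_poly A = \prod_(z <- rs) ('X - z%:P).
Proof.
move=> size_rs uniq_rs eig_rs.
have roots : all (root (char_poly A)) rs.
  by apply/allP => z /eig_rs; rewrite eigenvalue_root_char.
rewrite (all_roots_prod_XsubC _ roots) ?uniq_rootsE ?size_char_poly ?size_rs //.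
by rewrite (monicP (char_poly_monic A)) scale1r.
Qed.

Section TridiagonalDeterminant.
Variables (R : comPzRingType) (t : nat -> nat -> R).
Hypothesis t_band : forall i j : nat, (i.+1 < j)%N || (j.+1 < i)%N -> t i j = 0.

Definition lead_minor k := \det (\matrix_(i < k, j < k) t i j).

Lemma lead_minor_rec k :
  lead_minor k.+2 = t k.+1 k.+1 * lead_minor k.+1 - t k.+1 k * t k k.+1 * lead_minor k.
Proof.
have sign_even m : (-1) ^+ (m + m) = 1 :> R by rewrite addnn -signr_odd odd_double.
have last_col_minor : \det (row' ord_max (col' (widen_ord (leqnSn k.+1) ord_max)
    (\matrix_(i < k.+2, j < k.+2) t i j))) = t k k.+1 * lead_minor k.
  rewrite (expand_det_col _ ord_max) big_ord_recr big1 => [|i _]; last first.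
    by rewrite !mxE /= t_band ?mul0r // /bump; have := ltn_ord i; lia.
  rewrite /= add0r !mxE /= /bump leqnn ltnn /cofactor sign_even mul1r; congr (_ * \det _).
  apply/matrixP => i j.
  by rewrite !mxE /= !(bump_small (ltn_ord _)) (@bump_small k.+1 i (ltnW (ltn_ord i))).
rewrite [LHS](expand_det_row _ ord_max) !big_ord_recr big1 /= ?add0r => [|j _]; last first.
  by rewrite mxE t_band ?mul0r //=; have := ltn_ord j; lia.
rewrite /cofactor last_col_minor !mxE /= sign_even addSn exprS sign_even mulr1 mul1r.
have -> : row' ord_max (col' ord_max (\matrix_(i < k.+2, j < k.+2) t i j))
          = \matrix_(i < k.+1, j < k.+1) t i j.
  by apply/matrixP => i j; rewrite !mxE /= !bump_small.
rewrite -/(lead_minor k.+1); ring.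
Qed.

End TridiagonalDeterminant.

Section Szego.
Variable C : numClosedFieldType.

(* [(Phi_k, Phi_k^* )]: the monic orthogonal polynomial on the unit circle with
   Verblunsky coefficients [a] and its reversal. *)
Fixpoint szego (a : nat -> C) (k : nat) : {poly C} * {poly C} :=
  if k is k'.+1 then
    ('X * (szego a k').1 - (a k')^*%:P * (szego a k').2,
     (szego a k').2 - (a k')%:P * 'X * (szego a k').1)
  else (1, 1).

Lemma szego_ext (a a' : nat -> C) k :
  (forall m, (m < k)%N -> a m = a' m) -> szego a k = szego a' k.
Proof.
elim: k => [//|k IHk] eq_a /=; rewrite IHk ?eq_a // => m lt_mk.
exact/eq_a/ltnW.
Qed.

Lemma szego_monic (a : nat -> C) k : (szego a k).1 \is monic.
Proof.
suff [] : [/\ (size (szego a k).2 <= k.+1)%N,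
    (szego a k).1 \is monic & size (szego a k).1 = k.+1] by [].
elim: k => [|k [size_rev mon size_phi]] /=; first by rewrite monic1 size_poly1.
have size_Xphi : size ('X * (szego a k).1) = k.+2.
  by rewrite mulrC size_mulX ?size_phi // monic_neq0.
have size_rest : (size ((a k)^*%:P * (szego a k).2)%R < k.+2)%N.
  by rewrite mul_polyC (leq_ltn_trans (size_scale_leq _ _)).
split.
- rewrite (leq_trans (size_polyD _ _)) // geq_max size_polyN -mulrA mul_polyC.
  by rewrite (leq_trans (size_scale_leq _ _)) ?size_Xphi // andbT ltnW.
- by rewrite monicE lead_coefDl ?size_polyN ?size_Xphi // mulrC lead_coefMX -monicE.
- by rewrite size_polyDl ?size_polyN ?size_Xphi.
Qed.

Lemma horner_szego_rev0 (a : nat -> C) k : (szego a k).2.[0] = 1.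
Proof. by elim: k => [|k IHk] /=; rewrite !hornerE ?IHk; ring. Qed.

Lemma horner_szego0 (a : nat -> C) k : (szego a k.+1).1.[0] = - (a k)^*.
Proof. by rewrite /= !hornerE horner_szego_rev0; ring. Qed.

Lemma szego_rev_unit (a : nat -> C) k :
  `|a k| = 1 -> (szego a k.+1).2 = - (a k)%:P * (szego a k.+1).1.
Proof.
move=> norm_ak; have unit_ak : a k * (a k)^* = 1 by rewrite -normCK norm_ak expr1n.
transitivity ((a k * (a k)^*)%:P * (szego a k).2 - (a k)%:P * 'X * (szego a k).1).
  by rewrite unit_ak polyC1 mul1r.
by rewrite /= polyCM; ring.
Qed.

Lemma one_sub_norm_neq0 (z : C) : `|z| < 1 -> 1 - z * z^* != 0.
Proof.
by move=> lt_z1; rewrite subr_eq0 -normCK eq_sym lt_eqF // expr_lt1.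
Qed.

Lemma szego_inj k (a a' : nat -> C) : (forall m, (m < k)%N -> `|a m| < 1) ->
  szego a k = szego a' k -> forall m, (m < k)%N -> a m = a' m.
Proof.
elim: k => [//|k IHk] lt_a1 eq_szego.
have eq_ak : a k = a' k.
  apply: (can_inj (@conjCK C)); apply: oppr_inj.
  by rewrite -horner_szego0 eq_szego horner_szego0.
have : (1 - a k * (a k)^*)%:P * ('X * ((szego a k).1 - (szego a' k).1)) = 0.
  transitivity ((szego a k.+1).1 - (szego a' k.+1).1
                + (a k)^*%:P * ((szego a k.+1).2 - (szego a' k.+1).2)).
    by rewrite /= -eq_ak polyCB polyCM polyC1; ring.
  by rewrite eq_szego !subrr mulr0 addr0.
move/eqP; rewrite !mulf_eq0 polyC_eq0 (negbTE (one_sub_norm_neq0 (lt_a1 _ _))) //.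
rewrite polyX_eq0 subr_eq0 => /eqP eq_phi.
have eq_rev : (szego a k).2 = (szego a' k).2.
  by move: (congr1 snd eq_szego); rewrite /= eq_phi -eq_ak => /addIr.
have eq_k : szego a k = szego a' k.
  by rewrite [LHS]surjective_pairing eq_phi eq_rev -surjective_pairing.
move=> m; rewrite ltnS leq_eqVlt => /predU1P[-> //|lt_mk].
by apply: IHk => // j lt_jk; apply/lt_a1/ltnW.
Qed.

Definition paraorth (a : nat -> C) k (b : C) : {poly C} :=
  'X * (szego a k).1 - b%:P * (szego a k).2.

Lemma horner_paraorth0 (a : nat -> C) k b : (paraorth a k b).[0] = - b.
Proof. by rewrite !hornerE horner_szego_rev0; ring. Qed.

Lemma paraorth_inj k (a a' : nat -> C) b b' c c' :
  (forall m, (m <= k)%N -> `|a m| < 1) -> a k = a' k -> `|b| = 1 -> `|c| = 1 ->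
  paraorth a k b = paraorth a' k b' -> paraorth a k.+1 c = paraorth a' k.+1 c' ->
  [/\ b = b', c = c' & forall m, (m <= k)%N -> a m = a' m].
Proof.
move=> lt_a1 eq_ak norm_b norm_c eq_k eq_k1.
have eq_b : b = b'.
  by apply: oppr_inj; rewrite -(horner_paraorth0 a k) -(horner_paraorth0 a' k) eq_k.
have eq_c : c = c'.
  by apply: oppr_inj; rewrite -(horner_paraorth0 a k.+1) -(horner_paraorth0 a' k.+1) eq_k1.
subst b' c'; split => //.
set d := (szego a k).1 - (szego a' k).1.
(* eliminating the reversed polynomials between the two equations *)
have : 'X * d * ((b - (a k)^*)%:P * 'X + (c * (a k * b) - c)%:P) = 0.
  transitivity (b%:P * (paraorth a k.+1 c - paraorth a' k.+1 c)
     - ((a k)^*%:P * 'X + c%:P) * (paraorth a k b - paraorth a' k b)).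
    by rewrite /paraorth /d /= -eq_ak !polyCB !polyCM; ring.
  by rewrite eq_k eq_k1 !subrr !mulr0 subrr.
move/eqP; rewrite mulf_eq0 => /orP[|/eqP/(congr1 (horner^~ 0))]; last first.
  rewrite !hornerE => /eqP; rewrite subr_eq0 => /eqP/(congr1 Num.norm).
  rewrite !normrM norm_b norm_c mulr1 mul1r => norm_ak.
  by have := lt_a1 k (leqnn k); rewrite norm_ak ltxx.
rewrite mulf_eq0 polyX_eq0 subr_eq0 => /eqP eq_phi.
have eq_rev : (szego a k).2 = (szego a' k).2.
  move: eq_k; rewrite /paraorth eq_phi => /addrI /oppr_inj /eqP.
  by rewrite -subr_eq0 -mulrBr mulf_eq0 polyC_eq0 -normr_eq0 norm_b oner_eq0 subr_eq0 => /eqP.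
have eq_szego : szego a k = szego a' k.
  by rewrite [LHS]surjective_pairing eq_phi eq_rev -surjective_pairing.
move=> m; rewrite leq_eqVlt => /predU1P[-> //|lt_mk].
by apply: (szego_inj _ eq_szego) => // j lt_jk; apply/lt_a1/ltnW.
Qed.

End Szego.

Section CMV.
Variable R : realType.
Local Notation C := R[i].

(* Setting alpha_{N-1} := beta makes the trailing 1x1 block conj(beta) of L or M
   the corner of a block Theta(beta). *)
Definition cmv_coef N (al : nat -> C) (be : C) m := if (m < N.-1)%N then al m else be.

(* Row [i] of a block [Theta (g k)] occupying rows and columns [k, k.+1]; it is the
   top row ([k = i]) when [top] holds, the bottom row ([k = i.-1]) otherwise. *)
Definition theta_row (g : nat -> C) (top : bool) (i j : nat) : C :=
  if top then (if j == i then (g i)^* else if j == i.+1 then rho (g i) else 0)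
  else (if j == i.-1 then rho (g i.-1) else if j == i then - g i.-1 else 0).

Definition cmvL (g : nat -> C) (i j : nat) : C := theta_row g (~~ odd i) i j.

Definition cmvM (g : nat -> C) (i j : nat) : C :=
  if i == 0%N then (if j == 0%N then 1 else 0) else theta_row g (odd i) i j.

Lemma ThetaE (a : C) x y : (x < 2)%N -> (y < 2)%N ->
  Theta a (inord x) (inord y) =
  if (x == 0%N) && (y == 0%N) then a^* else if (x == 1%N) && (y == 1%N) then - a else rho a.
Proof. by move=> x_lt2 y_lt2; rewrite mxE !inordK. Qed.

Lemma cmv_factor0E N (al : nat -> C) (be : C) :
  cmv_factor N 0 al be = \matrix_(i, j) cmvL (cmv_coef N al be) i j.
Proof.
apply/matrixP => i j; rewrite !mxE /= !addn0 subn0 ThetaE ?ltn_pmod //.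
rewrite -[i == j]/(nat_of_ord i == nat_of_ord j) /cmvL /theta_row /cmv_coef.
move: (nat_of_ord i) (ltn_ord i) (nat_of_ord j) (ltn_ord j) => {i j} i lt_iN j lt_jN.
repeat (case: ifP => ?; try (exfalso; lia)).
all: try reflexivity.
all: match goal with |- ?F (?A ?x) = ?F (?A ?y) => (have -> : x = y by lia); reflexivity end.
Qed.

Lemma cmv_factor1E N (al : nat -> C) (be : C) :
  cmv_factor N 1 al be = \matrix_(i, j) cmvM (cmv_coef N al be) i j.
Proof.
apply/matrixP => i j; rewrite !mxE /= ThetaE ?ltn_pmod //.
rewrite -[i == j]/(nat_of_ord i == nat_of_ord j) /cmvM /theta_row /cmv_coef.
move: (nat_of_ord i) (ltn_ord i) (nat_of_ord j) (ltn_ord j) => {i j} i lt_iN j lt_jN.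
repeat (case: ifP => ?; try (exfalso; lia)).
all: try reflexivity.
all: match goal with |- ?F (?A ?x) = ?F (?A ?y) => (have -> : x = y by lia); reflexivity end.
Qed.

Lemma conj_rho (a : C) : `|a| <= 1 -> (rho a)^* = rho a.
Proof.
move=> le_a1; apply/conj_Creal/ger0_real.
by rewrite /rho sqrtC_ge0 subr_ge0 exprn_ile1.
Qed.

Lemma rho_mul (a : C) : rho a * rho a = 1 - a * a^*.
Proof. by rewrite -expr2 /rho sqrtCK normCK. Qed.

Lemma cmvM_unitary N (g : nat -> C) : (forall m, `|g m| <= 1) -> `|g N.-1| = 1 ->
  \matrix_(i < N, j < N) cmvM g i j \is unitarymx.
Proof.
move=> le_g1 norm_gN; apply/unitarymxP/matrixP => i j; rewrite !mxE.
under eq_bigr do rewrite !mxE.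
rewrite (@sum_ord_band _ N (fun k => cmvM g i k * (cmvM g j k)^*) i (ltn_ord i)); last first.
  by move=> k band_k; rewrite /cmvM /theta_row;
    repeat (case: ifP => ?; try (exfalso; lia)); rewrite ?mul0r.
have unit_gN k : k = N.-1 -> g k * (g k)^* = 1.
  by move=> ->; rewrite -normCK norm_gN expr1n.
rewrite -val_eqE /=.
move: (nat_of_ord i) (ltn_ord i) (nat_of_ord j) (ltn_ord j) => {i j} i lt_iN j lt_jN.
have [<-|neq_ij] := eqVneq i j; rewrite ?eqxx ?(negbTE neq_ij) /cmvM /theta_row.
all: repeat (case: ifP => ?; try (exfalso; lia)).
all: repeat match goal with H : is_true (_ == _) |- _ => move/eqP: H => H; subst end.
all: rewrite /= ?conjCK ?rmorphN ?conjC1 ?conjC0 ?conj_rho ?rho_mul.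
all: rewrite ?mulr1 ?mul0r ?mulr0 ?add0r ?addr0.
all: try ring; try exact: le_g1.
all: by rewrite mulrC; apply: unit_gN; lia.
Qed.

(* The pencil [X M^* - L]: since [M] is unitary, [X - L M = (X M^* - L) M]. *)
Definition cmv_pencil (g : nat -> C) (i j : nat) : {poly C} :=
  'X * (cmvM g j i)^*%:P - (cmvL g i j)%:P.

Lemma cmv_pencil_band g i j : (i.+1 < j)%N || (j.+1 < i)%N -> cmv_pencil g i j = 0.
Proof.
move=> band_ij; rewrite /cmv_pencil /cmvM /cmvL /theta_row.
by repeat (case: ifP => ?; try (exfalso; lia)); rewrite conjC0 subr0 mulr0.
Qed.

Lemma lead_minor_cmv_pencil g m :
  lead_minor (cmv_pencil g) m.*2 = (-1) ^+ m * (szego g m.*2).2 /\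
  lead_minor (cmv_pencil g) m.*2.+1 = (-1) ^+ m * (szego g m.*2.+1).1.
Proof.
have minor_rec := lead_minor_rec (@cmv_pencil_band g).
elim: m => [|m [IH_even IH_odd]].
  rewrite /lead_minor det_mx00 det_mx11 mxE /cmv_pencil /cmvM /cmvL /theta_row /=.
  by rewrite conjC1 !mul1r; split => //; ring.
have diag_odd : cmv_pencil g m.*2.+1 m.*2.+1 = 'X * (g m.*2.+1)%:P + (g m.*2)%:P.
  rewrite /cmv_pencil /cmvM /cmvL /theta_row /= odd_double /= !eqxx conjCK.
  by rewrite gtn_eqF // polyCN opprK.
have diag_even : cmv_pencil g m.*2.+2 m.*2.+2 =
    - ('X * (g m.*2.+1)^*%:P) - (g m.*2.+2)^*%:P.
  rewrite /cmv_pencil /cmvM /cmvL /theta_row /= odd_double /= !eqxx gtn_eqF //.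
  by rewrite rmorphN polyCN mulrN.
have off_even : cmv_pencil g m.*2.+1 m.*2 * cmv_pencil g m.*2 m.*2.+1 =
    1 - (g m.*2)%:P * (g m.*2)^*%:P.
  rewrite /cmv_pencil /cmvM /cmvL /theta_row /= odd_double /=.
  by repeat (case: ifP => ?; try (exfalso; lia));
    rewrite conjC0 mulr0 sub0r mulrNN -polyCM rho_mul polyCB polyC1 polyCM.
have off_odd : cmv_pencil g m.*2.+2 m.*2.+1 * cmv_pencil g m.*2.+1 m.*2.+2 =
    'X^2 * (1 - (g m.*2.+1)%:P * (g m.*2.+1)^*%:P).
  rewrite /cmv_pencil /cmvM /cmvL /theta_row /= odd_double /=.
  repeat (case: ifP => ?; try (exfalso; lia)).
  rewrite polyC0 !subr0 mulrACA -expr2 -polyCM -rmorphM rho_mul.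
  by rewrite rmorphB rmorph1 rmorphM /= conjCK polyCB polyC1 polyCM; ring.
rewrite doubleS !minor_rec IH_even IH_odd diag_odd diag_even off_even off_odd /=.
by rewrite exprS; split; ring.
Qed.

Lemma char_poly_CMV_pencil N (al : nat -> C) (be : C) :
  (forall m, (m < N.-1)%N -> `|al m| <= 1) -> `|be| = 1 ->
  char_poly (CMV N al be) =
    lead_minor (cmv_pencil (cmv_coef N al be)) N * (\det (cmv_factor N 1 al be))%:P.
Proof.
move=> le_al1 norm_be; set g := cmv_coef N al be.
have le_g1 m : `|g m| <= 1.
  by rewrite /g /cmv_coef; case: ifP => [/le_al1|_]; rewrite ?norm_be.
have norm_gN : `|g N.-1| = 1 by rewrite /g /cmv_coef ltnn.
rewrite /CMV cmv_factor0E cmv_factor1E -/g /lead_minor.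
set L := \matrix_(i, j) cmvL g i j; set M := \matrix_(i, j) cmvM g i j.
have MtM : M^t* *m M = 1%:M by rewrite -[M^t*]mul1mx mulmxKtV ?cmvM_unitary.
have -> : \matrix_(i, j) cmv_pencil g i j = 'X%:M *m map_mx polyC (M^t*) - map_mx polyC L.
  by apply/matrixP => i j; rewrite mul_scalar_mx !mxE.
by rewrite -det_map_mx -det_mulmx mulmxBl -mulmxA -map_mxM MtM map_mx1 mulmx1 -map_mxM.
Qed.

Lemma char_poly_CMV N (al : nat -> C) (be : C) : (0 < N)%N ->
  (forall m, (m < N.-1)%N -> `|al m| <= 1) -> `|be| = 1 ->
  char_poly (CMV N al be) = paraorth al N.-1 be^*.
Proof.
move=> N_gt0 le_al1 norm_be; set g := cmv_coef N al be.
have gN : g N.-1 = be by rewrite /g /cmv_coef ltnn.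
have NE : N = N.-1.+1 by rewrite prednK.
have lastE : paraorth al N.-1 be^* = (szego g N).1.
  rewrite [in RHS]NE /= gN /paraorth.
  by rewrite (@szego_ext _ g al) // => m lt_m; rewrite /g /cmv_coef lt_m.
have [c minorE] : exists c : C, lead_minor (cmv_pencil g) N = c%:P * (szego g N).1.
  have [minor_even minor_odd] := lead_minor_cmv_pencil g N./2.
  move: (odd_double_half N); case: (odd N) => /=; rewrite ?add1n ?add0n => halfE.
    by rewrite -halfE; exists ((-1) ^+ N./2); rewrite minor_odd polyC_exp polyCN polyC1.
  have revN : (szego g N).2 = - be%:P * (szego g N).1.
    by rewrite NE szego_rev_unit gN ?norm_be.
  exists ((-1) ^+ N./2 * - be); rewrite -[in LHS]halfE minor_even halfE revN.
  by rewrite polyCM polyC_exp polyCN polyC1 polyCN mulrA.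
have charE : char_poly (CMV N al be) = (\det (cmv_factor N 1 al be) * c) *: (szego g N).1.
  by rewrite char_poly_CMV_pencil // minorE mulrC mulrA -polyCM mul_polyC.
have := char_poly_monic (CMV N al be).
rewrite charE monicE lead_coefZ (monicP (szego_monic _ _)) mulr1 => /eqP ->.
by rewrite scale1r lastE.
Qed.

Lemma cmv_factor_ext N s (al al' : nat -> C) be :
  (forall j, (j < N.-1)%N -> al j = al' j) -> cmv_factor N s al be = cmv_factor N s al' be.
Proof.
move=> eq_al; apply/matrixP => i j; rewrite !mxE /=.
case: ifP => [/andP[le_s lt_N]|//]; rewrite eq_al //.
by move: le_s lt_N (ltn_ord i); lia.
Qed.

Lemma CMV_ext N (al al' : nat -> C) be :
  (forall j, (j < N.-1)%N -> al j = al' j) -> CMV N al be = CMV N al' be.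
Proof. by move=> eq_al; rewrite /CMV !(cmv_factor_ext _ _ eq_al). Qed.

Lemma CMV_eq_of_char_poly k (a1 a2 : nat -> C) b1 b2 c1 c2 :
  (forall j, (j <= k)%N -> `|a1 j| < 1) -> (forall j, (j <= k)%N -> `|a2 j| < 1) ->
  `|b1| = 1 -> `|b2| = 1 -> `|c1| = 1 -> `|c2| = 1 -> a1 k = a2 k ->
  char_poly (CMV k.+1 a1 b1) = char_poly (CMV k.+1 a2 b2) ->
  char_poly (CMV k.+2 a1 c1) = char_poly (CMV k.+2 a2 c2) ->
  CMV k.+1 a1 b1 = CMV k.+1 a2 b2 /\ CMV k.+2 a1 c1 = CMV k.+2 a2 c2.
Proof.
move=> lt_a1 lt_a2 nb1 nb2 nc1 nc2 eq_ak.
have charE (a : nat -> C) N be : (forall j, (j <= k)%N -> `|a j| < 1) ->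
    (0 < N)%N -> (N <= k.+2)%N -> `|be| = 1 ->
    char_poly (CMV N a be) = paraorth a N.-1 be^*.
  move=> lt_a N_gt0 le_N norm_be; apply: char_poly_CMV => // m lt_m.
  by apply/ltW/lt_a; lia.
rewrite !charE ?leqnSn ?leqnn //= => eq_k eq_k1.
have [||eq_b eq_c eq_a] := paraorth_inj lt_a1 eq_ak _ _ eq_k eq_k1; rewrite ?norm_conjC //.
rewrite (can_inj (@conjCK C) eq_b) (can_inj (@conjCK C) eq_c).
by split; apply: CMV_ext => j lt_j; apply: eq_a; lia.
Qed.

End CMV.

Section Circle.
Variable R : realType.

Lemma expi_neq (x y : R) : x < y -> y < x + 2 * pi -> expi x != expi y.
Proof.
move=> lt_xy lt_y2pi; apply/negP; rewrite /expi => /eqP[cos_xy sin_xy].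
set h := (y - x) / 2.
have cos_2h : cos (h *+ 2) = 1.
  by rewrite mulr2n /h -splitr cosB -cos_xy -sin_xy -!expr2 cos2Dsin2.
have : sin h ^+ 2 = 0.
  by move: cos_2h; rewrite cos_mulr2n sin2cos2 => /eqP; rewrite subr_eq => /eqP; lra.
have := pi_gt0 R; have : 0 < sin h by apply: sin_gt0_pi; rewrite /h; lra.
by move=> + _ /eqP; rewrite sqrf_eq0 => /gt_eqF ->.
Qed.

Lemma uniq_expi_incr N (f : nat -> R) : (forall j, (0 < j < N)%N -> f j < f j.+1) ->
  f N < f 1%N + 2 * pi -> uniq [seq expi (f j) | j <- iota 1 N].
Proof.
move=> incr_f wrap_f.
have lt_f : {in [pred j | 0 < j <= N]%N &, {homo f : i j / (i < j)%N >-> i < j}}.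
  apply: Order.NatMonotonyTheory.homo_ltn_lt_in => [i j Di Dj k|j Dj Dj1].
    by move: Di Dj; rewrite !inE !ltEnat /=; lia.
  by apply: incr_f; move: Dj Dj1; rewrite !inE; lia.
have le_f i j : (0 < i <= N)%N -> (0 < j <= N)%N -> (i <= j)%N -> f i <= f j.
  by move=> Di Dj; rewrite leq_eqVlt => /predU1P[-> //|lt_ij]; apply/ltW/lt_f.
have neq_f i j : (0 < i <= N)%N -> (0 < j <= N)%N -> (i < j)%N -> expi (f i) != expi (f j).
  move=> Di Dj lt_ij; apply: expi_neq; first exact: lt_f.
  have le_fjN : f j <= f N by apply: le_f => //; lia.
  have le_f1i : f 1%N <= f i by apply: le_f => //; lia.
  lra.
rewrite map_inj_in_uniq ?iota_uniq // => i j; rewrite !mem_iota => iota_i iota_j eq_f.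
have Di : (0 < i <= N)%N by lia.
have Dj : (0 < j <= N)%N by lia.
have [lt_ij|lt_ji|//] := ltngtP i j.
  by move: (neq_f i j Di Dj lt_ij); rewrite eq_f eqxx.
by move: (neq_f j i Dj Di lt_ji); rewrite eq_f eqxx.
Qed.

Lemma char_poly_expi_spectrum N (f : nat -> R) (A : 'M[R[i]]_N) :
  (forall j, (0 < j < N)%N -> f j < f j.+1) -> f N < f 1%N + 2 * pi ->
  (forall z, eigenvalue A z <-> exists2 j, (1 <= j <= N)%N & z = expi (f j)) ->
  char_poly A = \prod_(j <- iota 1 N) ('X - (expi (f j))%:P).
Proof.
move=> incr_f wrap_f spec_A.
rewrite (@char_poly_prod_eigenvalues _ _ _ [seq expi (f j) | j <- iota 1 N]) ?big_map //.
- by rewrite size_map size_iota.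
- exact: uniq_expi_incr.
move=> _ /mapP[j iota_j ->]; apply/spec_A; exists j => //.
by move: iota_j; rewrite mem_iota; lia.
Qed.

End Circle.

Theorem theorem7 (R : realType) (n : nat) (x1 x2 : nat -> R)
  (a1 a2 : nat -> R[i]) (b11 b21 b12 b22 : R[i]) :
  (2 <= n)%N ->
  (forall j, (1 <= j <= n - 1)%N -> x1 j < x2 j) ->
  (forall j, (1 <= j <= n - 2)%N -> x2 j < x1 j.+1) ->
  x2 (n - 1)%N = x1 n ->
  x1 n < x1 1%N + 2 * pi ->
  (forall j, (j <= n - 2)%N -> `|a1 j| < 1) ->
  (forall j, (j <= n - 2)%N -> `|a2 j| < 1) ->
  `|b11| = 1 -> `|b21| = 1 -> `|b12| = 1 -> `|b22| = 1 ->
  (forall z, eigenvalue (CMV n a1 b11) z <-> exists2 j, (1 <= j <= n)%N & z = expi (x1 j)) ->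
  (forall z, eigenvalue (CMV (n - 1) a1 b21) z <-> exists2 j, (1 <= j <= n - 1)%N & z = expi (x2 j)) ->
  (forall z, eigenvalue (CMV n a2 b12) z <-> exists2 j, (1 <= j <= n)%N & z = expi (x1 j)) ->
  (forall z, eigenvalue (CMV (n - 1) a2 b22) z <-> exists2 j, (1 <= j <= n - 1)%N & z = expi (x2 j)) ->
  a1 (n - 2)%N = a2 (n - 2)%N ->
  CMV n a1 b11 = CMV n a2 b12 /\ CMV (n - 1) a1 b21 = CMV (n - 1) a2 b22.
Proof.
case: n => [|[|k]] // _; rewrite !subSS !subn0.
move=> lt_x12 lt_x21 x2_last x1_wrap lt_a1 lt_a2 nb11 nb21 nb12 nb22.
move=> spec11 spec21 spec12 spec22 eq_a.
have incr_x1 j : (0 < j < k.+2)%N -> x1 j < x1 j.+1.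
  move=> Dj; apply: (lt_le_trans (lt_x12 j _)); first lia.
  have [->|neq_j] := eqVneq j k.+1; first by rewrite x2_last.
  by apply/ltW/lt_x21; lia.
have incr_x2 j : (0 < j < k.+1)%N -> x2 j < x2 j.+1.
  by move=> Dj; apply: (lt_trans (lt_x21 j _)); [lia | apply: lt_x12; lia].
have x2_wrap : x2 k.+1 < x2 1%N + 2 * pi.
  by rewrite x2_last (lt_trans x1_wrap) // ltrD2r lt_x12.
have [-> ->] // := CMV_eq_of_char_poly lt_a1 lt_a2 nb21 nb22 nb11 nb12 eq_a
  (etrans (char_poly_expi_spectrum incr_x2 x2_wrap spec21)
          (esym (char_poly_expi_spectrum incr_x2 x2_wrap spec22)))
  (etrans (char_poly_expi_spectrum incr_x1 x1_wrap spec11)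
          (esym (char_poly_expi_spectrum incr_x1 x1_wrap spec12))).
Qed.
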